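(* Let $H$ be a finite group such that for any $g,x\in H$ there is a positive integer $n(x,g)$ with $[[g,{}_nx],g]=1$ for all $n\ge n(x,g)$. Then $H$ is nilpotent.
   Context: Commutators: $a^b=b^{-1}ab$, $[a,b]=a^{-1}b^{-1}ab$, and $[a,{}_nb]=[\dots[[a,b],b],\dots,b]$ with $b$ repeated $n$ times. *)

From mathcomp Require Import all_boot all_fingroup all_solvable.
Set Implicit Arguments. Unset Strict Implicit. Unset Printing Implicit Defensive.
Local Open Scope group_scope.

(* [a, _n b] = [...[[a,b],b],...,b] with b repeated n times; [a, _0 b] = a.
   MathComp's [~ x, y] is x^-1 * y^-1 * x * y, matching the paper. *)
Definition comm_iter (gT : finGroupType) (a b : gT) (n : nat) : gT :=
  iter n (fun c => [~ c, b]) a.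

From mathcomp Require Import all_boot all_fingroup all_solvable zify.
Set Implicit Arguments. Unset Strict Implicit. Unset Printing Implicit Defensive.
Local Open Scope group_scope.

(* Let a in H normalise a nilpotent subgroup R of coprime order, t in R and
   x := a ^ t = a * [~ a, t].  All the [~ a, _n x] with n > 0 lie in R, and
   once [~ c, a] = 1 bracketing with x is bracketing with [~ a, t] in R, so
   the sequence eventually dies by nilpotency of R.  Coprimality then lets
   the vanishing travel back down to [~ a, x] = 1, whence a centralises R.
   A minimal counterexample H has only nilpotent proper subgroups, hence is
   solvable (in a simple such group distinct maximal subgroups meet
   trivially, and the conjugates of two non-conjugate ones would hold more
   than #|H| - 1 nontrivial elements).  So H has a nilpotent normal subgroup
   M of prime index q; a q-element s outside M centralises 'O_q^'(M), and
   H = 'O_q^'(M) * ('O_q(M) <*> <[s]>) is nilpotent. *)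

Definition comm_iter_engel (gT : finGroupType) (H : {set gT}) :=
  forall g x, g \in H -> x \in H ->
     exists2 m : nat, (0 < m)%N &
       forall n : nat, (m <= n)%N -> [~ comm_iter g x n, g] = 1.

Lemma comm_iterS (gT : finGroupType) (a b : gT) n :
  comm_iter a b n.+1 = [~ comm_iter a b n, b].
Proof. by []. Qed.

Lemma mem_commg_norm (gT : finGroupType) (R : {group gT}) r y :
  r \in R -> y \in 'N(R) -> [~ r, y] \in R.
Proof. by move=> rR yN; rewrite commgEl groupM ?groupV // memJ_norm. Qed.

(* [~ v, x ^+ #[x]] = 1 is the #[x]-th power of [~ v, x], as x commutes with it. *)
Lemma commg_coprime_eq1 (gT : finGroupType) (v x : gT) :
  commute x [~ v, x] -> coprime #[[~ v, x]] #[x] -> [~ v, x] = 1.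
Proof.
move=> cx co; have := commgX #[x] cx; rewrite expg_order commg1 => /esym/eqP.
rewrite -order_dvdn => dvd; apply/eqP; rewrite -order_eq1.
by rewrite -(gcdn_idPl dvd).
Qed.

Lemma nilpotent_comm_iter_eq1 (gT : finGroupType) (R : {group gT}) c w :
  nilpotent R -> c \in R -> w \in R -> exists n, comm_iter c w n = 1.
Proof.
move=> /lcnP[n Ln] cR wR; exists n; apply/set1gP; rewrite -Ln.
by elim: n {Ln} => [|n IHn] //=; rewrite lcnSn mem_commg.
Qed.

Lemma comm_iter_coprime_eq1 (gT : finGroupType) (R : {group gT}) (v x : gT) :
  (forall n, comm_iter v x n.+1 \in R) -> coprime #|R| #[x] ->
  (exists n, comm_iter v x n = 1) -> [~ v, x] = 1.
Proof.
move=> cR coRx [n]; elim: n => [|n IHn] cn1.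
  by move: cn1 => /= ->; rewrite comm1g.
case: n IHn cn1 => [|n] IHn cn1; first exact: cn1.
apply: IHn; apply: commg_coprime_eq1; last first.
  exact: coprime_dvdl (order_dvdG (cR n)) coRx.
by apply/commute_sym/commgP/eqP; exact: cn1.
Qed.

Section CoprimeAction.
Variables (gT : finGroupType) (H R : {group gT}) (a : gT).
Hypotheses (engH : comm_iter_engel H) (aH : a \in H) (sRH : R \subset H).
Hypotheses (nilR : nilpotent R) (nRa : a \in 'N(R)) (coRa : coprime #|R| #[a]).

Lemma engel_coprime_commg (t : gT) : t \in R -> [~ a, a ^ t] = 1.
Proof.
move=> tR; set w := [~ a, t]; set x := a ^ t.
have wR : w \in R by rewrite /w -invg_comm groupV mem_commg_norm.
have xE : x = a * w by rewrite /x conjg_mulR.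
have xH : x \in H by rewrite groupJ // (subsetP sRH).
have cR n : comm_iter a x n.+1 \in R.
  elim: n => [|n IHn].
    by rewrite /= xE commgMJ commgg conj1g mulg1 -invg_comm groupV mem_commg_norm.
  by rewrite comm_iterS mem_commg_norm // xE groupM // (subsetP (normG R)).
apply: (comm_iter_coprime_eq1 cR); first by rewrite /x orderJ.
(* Once [~ c, a] = 1, bracketing c with x = a * w is the same as bracketing with w. *)
have [m m_gt0 engm] := engH aH xH.
have tail n : comm_iter a x (n + m) = comm_iter (comm_iter a x m) w n.
  elim: n => // n IHn; rewrite addSn !comm_iterS -IHn {2}xE commgMJ.
  by rewrite engm ?leq_addl // conj1g mulg1.
have cmR : comm_iter a x m \in R by rewrite -(prednK m_gt0).
have [n cn1] := nilpotent_comm_iter_eq1 nilR cmR wR.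
by exists (n + m); rewrite tail.
Qed.

Lemma engel_coprime_cent : a \in 'C(R).
Proof.
apply/centP=> t tR; have := engel_coprime_commg tR.
move/eqP/commgP=> cax; apply/commute_sym/commgP/eqP; apply: commg_coprime_eq1.
  rewrite -invg_comm; apply/commuteV.
  by rewrite -(mulKg a [~ a, t]) -conjg_mulR; apply: commuteM => //; apply/commuteV.
by apply: coprime_dvdl coRa; rewrite order_dvdG ?mem_commg_norm.
Qed.

End CoprimeAction.

Lemma maximal_meet_proper (gT : finGroupType) (H M L : {group gT}) :
  maximal M H -> maximal L H -> M != L -> M :&: L \proper M.
Proof.
move=> maxM maxL neML; rewrite properEneq subsetIl andbT.
apply: contra neML => /eqP defM; have sML : M \subset L by rewrite -defM subsetIr.
case/maxgroupP: maxM => _ /(_ L (maxgroupp maxL) sML) defL.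
by apply/eqP/val_inj; rewrite /= defL.
Qed.

Lemma index_double_leq (gT : finGroupType) (G M : {group gT}) :
  M \subset G -> M :!=: 1 -> #|G : M| * 2 <= #|G|.
Proof. by move=> sMG ntM; rewrite -(Lagrange sMG) mulnC leq_mul2r cardG_gt1 ntM orbT. Qed.

Section MinimalSimple.
Variables (gT : finGroupType) (H : {group gT}).
Hypothesis nilH : forall K : {group gT}, K \proper H -> nilpotent K.
Hypothesis simH : simple H.

Lemma normal_trivial_or_full (N : {group gT}) : N <| H -> N :=: 1 \/ N :=: H.
Proof. by case/simpleP: simH => _ /(_ N) simN /simN[] ->; [left | right]. Qed.

(* Were I := M :&: L nontrivial, 'N_H(I) would lie in a maximal K distinct from
   M or L, say from X; as I grows in its normaliser inside the nilpotent X,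
   the pair (K, X) would have a larger intersection than (M, L). *)
Lemma maximal_meet_trivial (M L : {group gT}) :
  maximal M H -> maximal L H -> M != L -> M :&: L = 1.
Proof.
have [k] : exists k, #|H| - #|M :&: L| < k by exists (#|H| - #|M :&: L|).+1.
elim: k M L => // k IHk M L ltIk maxM maxL neML.
apply/eqP/idPn=> ntI; set I := (M :&: L)%G.
have pIM : I \proper M by exact: maximal_meet_proper maxM maxL neML.
have pIL : I \proper L by rewrite /I /= setIC (maximal_meet_proper maxL maxM) // eq_sym.
have pNH : 'N_H(I) \proper H.
  rewrite properEneq subsetIl andbT; apply: contraNneq ntI => defN.
  have sIH := subset_trans (proper_sub pIM) (proper_sub (maxgroupp maxM)).
  have nsIH : I <| H by rewrite /normal sIH -{1}defN subsetIr.
  case: (normal_trivial_or_full nsIH) => [-> // | defI].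
  by have := proper_trans pIM (maxgroupp maxM); rewrite defI properxx.
have [K maxK sNK] :=
  maxgroup_exists (pNH : (fun X : {group gT} => X \proper H) _).
have grow (X : {group gT}) : maximal X H -> K != X -> I \proper X -> False.
  move=> maxX neKX pIX; have pIN := nilpotent_proper_norm (nilH (maxgroupp maxX)) pIX.
  have sNKX : 'N_X(I) \subset K :&: X.
    by rewrite subsetI subsetIl (subset_trans _ sNK) ?setSI ?proper_sub ?(maxgroupp maxX).
  have ltIKX := leq_trans (proper_card pIN) (subset_leq_card sNKX).
  have leKXH : #|K :&: X| <= #|H|.
    by rewrite subset_leq_card // (subset_trans (subsetIr _ _)) ?proper_sub ?(maxgroupp maxX).
  have ltKXk : #|H| - #|K :&: X| < k.
    exact: leq_trans (ltn_sub2l (leq_trans ltIKX leKXH) ltIKX) ltIk.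
  have /eqP := IHk K X ltKXk maxK maxX neKX.
  apply/negP; apply: contra ntI => /eqP triv; rewrite -subG1 -triv.
  by apply: subset_trans (proper_sub pIN) sNKX.
have [defK | neKM] := eqVneq K M; last exact: grow M maxM neKM pIM.
by apply: (grow L maxL) pIL; rewrite defK.
Qed.

Lemma maximal_self_normalizing (M : {group gT}) :
  maximal M H -> M :!=: 1 -> 'N_H(M) = M.
Proof.
move=> maxM ntM; have pMH := maxgroupp maxM.
have sMN : M \subset 'N_H(M) by rewrite subsetI proper_sub // normG.
have [pNH | ] := boolP ('N_H(M) \proper H).
  by case/maxgroupP: maxM => _ /(_ _ pNH sMN).
rewrite properEneq subsetIl andbT negbK => /eqP defN.
have nsMH : M <| H by rewrite /normal proper_sub // -{1}defN subsetIr.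
case: (normal_trivial_or_full nsMH) => defM; first by rewrite defM eqxx in ntM.
by rewrite defM properxx in pMH.
Qed.

Lemma maximal_normedTI (M : {group gT}) :
  maximal M H -> M :!=: 1 -> normedTI M^# H M.
Proof.
move=> maxM ntM; have sMH := proper_sub (maxgroupp maxM).
apply/normedTI_P; split.
- by have [x xM ntx] := trivgPn _ ntM; apply/set0Pn; exists x; rewrite !inE ntx.
- by rewrite subsetI sMH normD1 normG.
move=> g gH; rewrite -setI_eq0 => /set0Pn[x].
rewrite conjD1g !inE => /andP[/andP[ntx xM] /andP[_ xMg]].
rewrite -(maximal_self_normalizing maxM ntM) inE gH; apply/normP.
have maxMg : maximal (M :^ g)%G H by rewrite -(conjGid gH) maximalJ.
have [/(congr1 val) // | neMgM] := eqVneq (M :^ g)%G M.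
have /setP/(_ x) := maximal_meet_trivial maxMg maxM neMgM.
by rewrite !inE xMg xM (negPf ntx).
Qed.

Lemma card_class_support_maximal (M : {group gT}) :
  maximal M H -> M :!=: 1 -> #|class_support M^# H| + #|H : M| = #|H|.
Proof.
move=> maxM ntM; have cardM : #|M| = #|M^#|.+1 by rewrite (cardsD1 1 M) group1.
rewrite (card_support_normedTI (maximal_normedTI maxM ntM)) addnC -mulSn -cardM.
by rewrite Lagrange // proper_sub // (maxgroupp maxM).
Qed.

Lemma maximal_class_support_eq (M L : {group gT}) :
  maximal M H -> maximal L H ->
  ~~ [disjoint class_support M^# H & class_support L^# H] ->
  class_support L^# H = class_support M^# H.
Proof.
move=> maxM maxL; rewrite -setI_eq0 => /set0Pn[z /setIP[]].
case/imset2P=> u g /setD1P[ntu uM] gH ->.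
case/imset2P=> v k /setD1P[_ vL] kH defz.
have maxMg : maximal (M :^ g)%G H by rewrite -(conjGid gH) maximalJ.
have maxLk : maximal (L :^ k)%G H by rewrite -(conjGid kH) maximalJ.
have [defLk | neMgLk] := eqVneq (M :^ g)%G (L :^ k)%G; last first.
  have /setP/(_ (u ^ g)) := maximal_meet_trivial maxMg maxLk neMgLk.
  by rewrite !inE memJ_conjg uM conjg_eq1 (negPf ntu) defz memJ_conjg vL.
have defL : L :=: M :^ (g * k^-1) by rewrite conjsgM -[M :^ g]/(gval (M :^ g)%G) defLk conjsgK.
by rewrite defL -conjD1g class_supportGidl // groupM ?groupV.
Qed.

Lemma minimal_nonnilpotent_simple_abelian : abelian H.
Proof.
apply/idPn=> nabH.
have maximal_over h : h \in H -> {M : {group gT} | maximal M H & h \in M}.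
  move=> hH; have pH : <[h]> \proper H.
    rewrite properEneq cycle_subG hH andbT.
    by apply: contraNneq nabH => <-; apply: cycle_abelian.
  have [M maxM] :=
    maxgroup_exists (pH : (fun X : {group gT} => X \proper H) _).
  by rewrite cycle_subG; exists M.
have supp_sub (M : {group gT}) : M \subset H -> class_support M^# H \subset H^#.
  move=> sMH; apply/subsetP=> _ /imset2P[u g /setD1P[ntu uM] gH ->].
  by rewrite !inE conjg_eq1 ntu groupJ // (subsetP sMH).
have [h hH nth] : exists2 h, h \in H & h != 1.
  by case/simpleP: simH => /trivgPn[h hH nth] _; exists h.
have [M maxM hM] := maximal_over h hH.
have ntM : M :!=: 1 by apply/trivgPn; exists h.
have sMH := proper_sub (maxgroupp maxM).
have cardCM := card_class_support_maximal maxM ntM.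
have indexM : 1 < #|H : M| by rewrite indexg_gt1; case/andP: (maxgroupp maxM).
have [h' h'H] : exists2 h', h' \in H & h' \notin 1 |: class_support M^# H.
  apply/subsetPn/negP => /subset_leq_card; rewrite cardsU1 -cardCM addnC leq_add2r.
  by move/leq_trans/(_ (leq_b1 _)); rewrite leqNgt indexM.
rewrite !inE negb_or => /andP[nth' h'CM].
have [L maxL h'L] := maximal_over h' h'H.
have ntL : L :!=: 1 by apply/trivgPn; exists h'.
have sLH := proper_sub (maxgroupp maxL).
have cardCL := card_class_support_maximal maxL ntL.
have disjCML : [disjoint class_support M^# H & class_support L^# H].
  apply: contraR h'CM => /(maximal_class_support_eq maxM maxL) <-.
  by rewrite mem_class_support // !inE nth'.
have leCH : #|class_support M^# H :|: class_support L^# H| <= #|H^#|.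
  by rewrite subset_leq_card // subUset !supp_sub.
have := cardsUI (class_support M^# H) (class_support L^# H).
rewrite (disjoint_setI0 disjCML) cards0 addn0 => cardU.
have cardH : #|H| = #|H^#|.+1 by rewrite (cardsD1 1 H) group1.
move: cardCM cardCL leCH (index_double_leq sMH ntM) (index_double_leq sLH ntL).
rewrite cardH cardU; set cM := #|class_support M^# H|; set cL := #|class_support L^# H|.
move: #|H : M| #|H : L| #|H^#| => iM iL n; clearbody cM cL; clear; lia.
Qed.

End MinimalSimple.

Lemma prime_index_nilpotent (gT : finGroupType) (H M : {group gT}) :
  M <| H -> prime #|H : M| -> nilpotent M ->
  (forall s, s \in H -> #|H : M|.-elt s -> s \in 'C('O_#|H : M|^'(M))) ->
  nilpotent H.
Proof.
set q := #|H : M| => nsMH q_pr nilM centR.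
have [sMH nMH] := andP nsMH.
have maxM : maximal M H := p_index_maximal sMH q_pr.
have [h hH hM] : exists2 h, h \in H & h \notin M.
  by apply/subsetPn; rewrite -indexg_eq1 -/q; apply: contraTneq q_pr => ->.
set s := h.`_q.
have sH : s \in H by move: hH; rewrite -cycle_subG => /subsetP; apply; apply: cycle_constt.
have qs : q.-elt s := p_elt_constt q h.
(* The coset of s is the q-part of the coset of h, i.e. the latter itself,
   since H / M is a q-group. *)
have sM : s \notin M.
  apply: contra hM => sM; apply: coset_idr; first exact: subsetP nMH h hH.
  have qH : q.-group (H / M) by rewrite /pgroup card_quotient // pnat_id.
  rewrite -(constt_p_elt (mem_p_elt qH (mem_quotient M hH))) -morph_constt ?(subsetP nMH) //.
  exact: coset_id.
set R := 'O_q^'(M); set Q := ('O_q(M) <*> <[s]>)%G.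
have [_ defM cRQM _] := dprodP (nilpotent_pcoreC q nilM).
have nQMs : <[s]> \subset 'N('O_q(M)).
  by rewrite cycle_subG (subsetP (char_norm_trans (pcore_char q M) nMH)).
have qQ : q.-group Q by rewrite /Q /= norm_joinEr // pgroupM pcore_pgroup.
have cRQ : Q \subset 'C(R) by rewrite join_subG cycle_subG centR // andbT centsC.
have sQH : Q \subset H.
  by rewrite join_subG cycle_subG sH (subset_trans (pcore_sub q M)).
have sQM : ~~ (Q \subset M).
  by apply: contra sM => /subsetP; apply; rewrite (subsetP (joing_subr _ _)) ?cycle_id.
have defH : H :=: R * Q.
  rewrite -(mulg_normal_maximal nsMH maxM sQH sQM) -{1}defM -(centC cRQM).
  by rewrite -mulgA mulSGid ?joing_subl.
by rewrite defH mulg_nil // (nilpotentS (pcore_sub _ _) nilM) (pgroup_nil qQ).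
Qed.

Lemma minimal_nonnilpotent_solvable (gT : finGroupType) (H : {group gT}) :
  (forall K : {group gT}, K \proper H -> nilpotent K) -> solvable H.
Proof.
have [n] : exists n, #|H| < n by exists #|H|.+1.
elim: n gT H => [|n IHn] gT H; first by rewrite ltn0.
move=> ltHn nilH.
have [simH | nsimH] := boolP (simple H).
  exact: abelian_sol (minimal_nonnilpotent_simple_abelian nilH simH).
have [-> | ntH] := eqVneq H 1%G; first exact: solvable1.
have [N /and3P[nsNH ntN neNH]] : exists N : {group gT}, [&& N <| H, N :!=: 1 & N :!=: H].
  apply/existsP; apply: contraR nsimH => /existsPn noN; apply/simpleP; split=> // N nsNH.
  by have := noN N; rewrite nsNH /= negb_and !negbK => /orP[] /eqP->; [left | right].
have pNH : N \proper H by rewrite properEneq neNH normal_sub.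
rewrite (series_sol nsNH) (nilpotent_sol (nilH N pNH)) /=.
apply: IHn => [|Kb pKb].
  rewrite card_quotient ?normal_norm // -ltnS (leq_trans _ ltHn) // ltnS.
  by rewrite -(Lagrange (normal_sub nsNH)) ltn_Pmull ?cardG_gt1 // indexg_gt0.
have [K defKb sNK sKH] := inv_quotientS nsNH (proper_sub pKb).
rewrite defKb quotient_nil // nilH // properEneq sKH andbT.
by apply: contraTneq pKb => defK; rewrite defKb defK properxx.
Qed.

Lemma comm_iter_engelS (gT : finGroupType) (H K : {set gT}) :
  K \subset H -> comm_iter_engel H -> comm_iter_engel K.
Proof. by move=> /subsetP sKH engH g x /sKH gH /sKH xH; apply: engH. Qed.

Lemma comm_iter_engel_nilpotent (gT : finGroupType) (H : {group gT}) :
  comm_iter_engel H -> nilpotent H.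
Proof.
have [n] : exists n, #|H| < n by exists #|H|.+1.
elim: n H => [|n IHn] H; first by rewrite ltn0.
move=> ltHn engH.
have nilH (K : {group gT}) : K \proper H -> nilpotent K.
  move=> pKH; apply: IHn (comm_iter_engelS (proper_sub pKH) engH).
  exact: leq_trans (proper_card pKH) ltHn.
have [-> | ntH] := eqVneq H 1%G; first exact: nilpotent1.
have [M nsMH q_pr] := sol_prime_factor_exists (minimal_nonnilpotent_solvable nilH) ntH.
have pMH : M \proper H.
  by rewrite properEneq normal_sub // andbT; apply: contraTneq q_pr => ->; rewrite indexgg.
apply: (prime_index_nilpotent nsMH q_pr (nilH M pMH)) => s sH qs.
have nsRH : 'O_#|H : M|^'(M) <| H := char_normal_trans (pcore_char _ _) nsMH.
apply: (engel_coprime_cent engH sH (normal_sub nsRH)).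
- exact: nilpotentS (pcore_sub _ _) (nilH M pMH).
- exact: subsetP (normal_norm nsRH) s sH.
- exact: p'nat_coprime (pcore_pgroup _ _) qs.
Qed.

Theorem lemma5p2 (gT : finGroupType) (H : {group gT}) :
  (forall g x, g \in H -> x \in H ->
     exists2 m : nat, (0 < m)%N &
       forall n : nat, (m <= n)%N -> [~ comm_iter g x n, g] = 1) ->
  nilpotent H.
Proof. exact: comm_iter_engel_nilpotent. Qed.
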